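(* Let $s\in\mathbb N$ and $k,n\in\mathbb N_0$. (i) For $s\le j\le n/2$ and $1\le\ell\le a^d_{n-2j}$, $$P^{-s,n}_{j,\ell}(x)=\frac{(1-n-\frac d2)_j}{(-j)_s\,(1-n-\frac d2+2s)_{j-s}}(\|x\|^2-1)^s\,P^{s,n-2s}_{j-s,\ell}(x).$$ (ii) For $0\le j\le n/2$ and $1\le\ell\le a^d_{n-2j}$, $$\Delta^kP^{-s,n}_{j,\ell}(x)=4^k(n+\tfrac d2-2k)_{2k}\,P^{2k-s,n-2k}_{j-k,\ell}(x)+q(\|x\|^2)\,Y^{n-2j}_\ell(x),$$ where $q$ is a univariate polynomial of degree at most $j_0-k-1$ (so $q=0$ if $j_0-k-1<0$), with $j_0=s+j-n-\frac d2+1$ if this number belongs to $\{1,2,\dots,j\}$ and $j_0=0$ otherwise. In particular $q=0$ if $j+k\ge s$.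
   Context: $(a)_0=1$, $(a)_m=a(a+1)\cdots(a+m-1)$. $\mathcal H^d_m$: homogeneous harmonic polynomials of degree $m$ in $d$ variables, $a^d_m=\dim\mathcal H^d_m$, $\{Y^m_\ell\}_{\ell=1}^{a^d_m}$ a basis of $\mathcal H^d_m$ orthonormal in $L^2$ of the normalized surface measure on $\mathbb S^{d-1}$. Generalized Jacobi polynomials: for $\alpha,\beta\in\mathbb R$, $j\in\mathbb N_0$, let $j_0=-j-\alpha-\beta$ if this number lies in $\{1,\dots,j\}$ and $j_0=0$ otherwise; $\widehat P^{(\alpha,\beta)}_j(t)=\sum_{k=j_0}^j\frac{(k+\alpha+1)_{j-k}}{(j-k)!\,k!\,(j+\alpha+\beta+k+1)_{j-k}}\big(\frac{t-1}2\big)^k$, and $\widehat P^{(\alpha,\beta)}_j=0$ for negative integers $j$. For $\mu\in\mathbb R$, $n\in\mathbb N_0$, $0\le j\le n/2$, $1\le\ell\le a^d_{n-2j}$: $P^{\mu,n}_{j,\ell}(x)=(n-j+\tfrac d2)_j\,\widehat P^{(\mu,n-2j+\frac d2-1)}_j(2\|x\|^2-1)\,Y^{n-2j}_\ell(x)$; by convention $P^{\mu,n}_{j,\ell}=0$ if $j<0$ or $j>n/2$. Note $P^{2k-s,n-2k}_{j-k,\ell}$ involves the harmonic $Y^{n-2j}_\ell$. *)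

From HB Require Import structures.
From mathcomp Require Import all_boot all_order all_algebra.
From mathcomp Require Import mpoly.
Set Implicit Arguments. Unset Strict Implicit. Unset Printing Implicit Defensive.
Import Order.TTheory GRing.Theory Num.Theory.
Local Open Scope ring_scope.

Section Defs.
Variable R : realFieldType.

Definition poch (a : R) (m : nat) : R := \prod_(i < m) (a + i%:R).

Definition jzero (x : R) (j : nat) : nat :=
  if [pick m : 'I_j.+1 | (0 < m)%N && (x == (m : nat)%:R)] is Some m then val m
  else 0%N.

Definition gjacobi (a b : R) (j : nat) : {poly R} :=
  \sum_(jzero (- j%:R - a - b) j <= k < j.+1)
     (poch (k%:R + a + 1) (j - k) /
        ((j - k)`!%:R * k`!%:R * poch (j%:R + a + b + k%:R + 1) (j - k)))
     *: ((2%:R)^-1 *: ('X - 1)) ^+ k.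

Variable d : nat.

Definition pevalMP (p : {poly R}) (t : {mpoly R[d]}) : {mpoly R[d]} :=
  (map_poly (@mpolyC d R) p).[t].

Definition normsq : {mpoly R[d]} := \sum_(i < d) 'X_i ^+ 2.

Definition lap (p : {mpoly R[d]}) : {mpoly R[d]} :=
  \sum_(i < d) (p^`M(i))^`M(i).

(* P^{mu,n}_{j,l} where Y plays the role of the harmonic Y^{n-2j}_l;
   it is 0 when j < 0 or j > n/2. *)
Definition Pfam (mu : R) (n : nat) (j : int) (Y : {mpoly R[d]}) : {mpoly R[d]} :=
  match j with
  | Posz j' =>
      if (2 * j' <= n)%N then
        poch (n%:R - j'%:R + d%:R / 2%:R) j' *:
          (pevalMP (gjacobi mu (n%:R - 2%:R * j'%:R + d%:R / 2%:R - 1) j')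
                   (2%:R *: normsq - 1) * Y)
      else 0
  | Negz _ => 0
  end.

End Defs.

From HB Require Import structures.
From mathcomp Require Import all_boot all_order all_algebra.
From mathcomp Require Import mpoly.
From mathcomp Require Import ring lra zify.
Import Order.TTheory GRing.Theory Num.Theory.
Set Implicit Arguments. Unset Strict Implicit. Unset Printing Implicit Defensive.
Local Open Scope ring_scope.

(* Write P^{mu,n}_{j,l}(x) = F(|x|^2 - 1) Y(x), where F is the Jacobi polynomial
   written in u = (t - 1) / 2 = |x|^2 - 1 and Y is harmonic, homogeneous of degree
   m = n - 2j.  By the product rule and Euler's identity, the Laplacian acts on
   such products through the ordinary differential operator
   4 (u + 1) F'' + (4 m + 2 d) F' on F.
   (i) is an identity between coefficients: for mu = -s the first s coefficients
   vanish and the others are those of the mu = s polynomial shifted by s, up to a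
   ratio of Pochhammer symbols.
   (ii) follows from one step of the differential operator, which maps the
   (normalised) profile of parameter mu and degree j to a multiple of the profile
   of parameter mu + 2 and degree j - 1.  This coefficient recurrence only fails
   below j0, where a denominator of the hypergeometric coefficients vanishes and
   the coefficient is read as 0; iterating k times, these failures add up to a
   polynomial of degree < j0 - k. *)

Section Pochhammer.
Variable R : realFieldType.
Implicit Types (a x : R) (m n : nat).

Lemma poch0 a : poch a 0 = 1.
Proof. by rewrite /poch big_ord0. Qed.

Lemma pochS a n : poch a n.+1 = poch a n * (a + n%:R).
Proof. by rewrite /poch big_ord_recr. Qed.

Lemma pochSl a n : poch a n.+1 = a * poch (a + 1) n.
Proof.
rewrite /poch big_ord_recl /= addr0; congr (_ * _).
by apply: eq_bigr => i _; rewrite /bump /= natrD -addrA addrC (addrC 1) -addrA.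
Qed.

Lemma poch_eq0P a n : reflect (exists2 t, (t < n)%N & a + t%:R = 0) (poch a n == 0).
Proof.
apply: (iffP (prodf_eq0 _ _)) => [[t _ /eqP ht]|[t tn ht]].
  by exists t.
by exists (Ordinal tn); rewrite //= ht.
Qed.

Lemma poch_gt0 a n : 0 < a -> 0 < poch a n.
Proof.
move=> a0; elim: n => [|n IH]; first by rewrite poch0.
by rewrite pochS mulr_gt0 // (lt_le_trans a0) // lerDl.
Qed.

Lemma poch_reflect a n : poch a n = (-1) ^+ n * poch (- a - n%:R + 1) n.
Proof.
elim: n a => [|n IH] a; first by rewrite !poch0 expr0 mulr1.
rewrite pochS IH pochSl exprS.
have -> : - a - n.+1%:R + 1 + 1 = - a - n%:R + 1 by rewrite -addn1 natrD; ring.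
rewrite -addn1 natrD; ring.
Qed.

Lemma poch_fact m n : poch (m%:R + 1) n * m`!%:R = (m + n)`!%:R :> R.
Proof.
elim: n => [|n IH]; first by rewrite poch0 mul1r addn0.
rewrite pochS mulrAC IH addnS factS natrM mulrC; congr (_ * _).
by rewrite -addn1 !natrD; ring.
Qed.

Lemma fact_neq0 n : n`!%:R != 0 :> R.
Proof. by rewrite pnatr_eq0 -lt0n fact_gt0. Qed.

End Pochhammer.

Section Jzero.
Variable R : realFieldType.
Implicit Types (x : R) (j k m : nat).

Lemma jzeroP x j :
  jzero x j = 0%N \/ x = (jzero x j)%:R /\ (0 < jzero x j <= j)%N.
Proof.
rewrite /jzero; case: pickP => [m /andP [m0 /eqP xm]|_]; last by left.
by right; split => //; rewrite m0 -ltnS ltn_ord.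
Qed.

Lemma jzero_nat x j m : x = m%:R -> (0 < m <= j)%N -> jzero x j = m.
Proof.
move=> -> /andP [m0 mj]; rewrite /jzero; case: pickP => [m' /andP [_ /eqP]|].
  by move/eqP; rewrite eqr_nat => /eqP.
by move/(_ (Ordinal (mj : (m < j.+1)%N))); rewrite /= m0 eqxx.
Qed.

Lemma jzero_subn x j k :
  ((jzero (x - k%:R) (j - k)).-1 <= jzero x j - k.+1)%N.
Proof.
case: (jzeroP (x - k%:R) (j - k)) => [->|[e /andP [m0 mj]]] //.
set m := jzero _ _ in e m0 mj *.
have ex : x = (m + k)%:R by rewrite natrD -e; ring.
by rewrite (jzero_nat ex); lia.
Qed.

Lemma jzero_lt x j k : x < k.+1%:R -> (jzero x j <= k)%N.
Proof.
by case: (jzeroP x j) => [->|[e _]] // lt; rewrite -ltnS -(ltr_nat R) -e.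
Qed.

End Jzero.

Section JacobiInU.
Variable R : realFieldType.
Implicit Types (a b c h A : R) (p q : {poly R}).

Definition jacobi_coef a b (j k : nat) : R :=
  poch (k%:R + a + 1) (j - k) /
    ((j - k)`!%:R * k`!%:R * poch (j%:R + a + b + k%:R + 1) (j - k)).

(* \hat P^{(a,b)}_j written in the variable u = (t - 1) / 2. *)
Definition jacobiU a b (j : nat) : {poly R} := \poly_(k < j.+1) jacobi_coef a b j k.

Lemma coef_jacobiU a b j k :
  (jacobiU a b j)`_k = if (k < j.+1)%N then jacobi_coef a b j k else 0.
Proof. exact: coef_poly. Qed.

Lemma gjacobiE a b j :
  gjacobi a b j = jacobiU a b j \Po (2%:R^-1 *: ('X - 1)).
Proof.
have -> : gjacobi a b j =
    \sum_(0 <= k < j.+1) jacobi_coef a b j k *: (2%:R^-1 *: ('X - 1)) ^+ k.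
  rewrite /gjacobi; case: (jzeroP (- j%:R - a - b) j) => [-> //|[e /andP [j0 jj]]].
  rewrite [RHS](big_cat_nat (leq0n _) (leqW jj)) /= [X in _ = X + _]big1_seq ?add0r //.
  move=> k /andP [_]; rewrite mem_index_iota => /andP [_ kj].
  (* x / 0 = 0: the terms dropped by gjacobi have a vanishing denominator *)
  suff p0 : poch (j%:R + a + b + k%:R + 1) (j - k) == 0.
    by rewrite /jacobi_coef (eqP p0) !mulr0 invr0 mulr0 scale0r.
  apply/poch_eq0P; exists (jzero (- j%:R - a - b) j - k.+1)%N; first by lia.
  by rewrite natrB // -e -(addn1 k) natrD; ring.
rewrite big_mkord /jacobiU poly_def linear_sum; apply: eq_bigr => k _.
by rewrite linearZ /= rmorphXn /= comp_polyX.
Qed.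

Definition radial_op c p : {poly R} := 4%:R *: (('X + 1) * p^`()^`()) + c *: p^`().

Lemma coef_radial_op c p i : (radial_op c p)`_i =
  4%:R * (p`_i.+2 * i.+2%:R * i.+1%:R + p`_i.+1 * i.+1%:R * i%:R)
  + c * (p`_i.+1 * i.+1%:R).
Proof.
rewrite /radial_op coefD !coefZ [(_ + 1) * _]mulrDl mul1r coefD coefXM.
by case: i => [|i] /=; rewrite !coef_deriv; ring.
Qed.

Lemma size_radial_op c p : (size (radial_op c p) <= (size p).-1)%N.
Proof.
apply/leq_sizeP => i hi.
have h1 : (size p <= i.+1)%N by move: hi; case: (size p) => //= n; lia.
rewrite coef_radial_op (nth_default _ h1) (@nth_default _ _ p i.+2) 1?ltnW //; ring.
Qed.

Lemma radial_opD c p q : radial_op c (p + q) = radial_op c p + radial_op c q.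
Proof. by rewrite /radial_op !derivD mulrDr !scalerDr addrACA. Qed.

Lemma radial_opZ c a p : radial_op c (a *: p) = a *: radial_op c p.
Proof.
rewrite /radial_op !derivZ -scalerAr !scalerA (mulrC 4%:R) (mulrC c) -!scalerA.
by rewrite scalerDr.
Qed.

Lemma radial_op0 c : radial_op c 0 = 0.
Proof. by rewrite /radial_op !deriv0 mulr0 !scaler0 addr0. Qed.

(* The error term in radial_op_jacobiU: it is supported on the coefficients
   whose jacobi_coef has a vanishing denominator, read as x / 0 = 0. *)
Definition jacobi_defect A B (j : nat) : {poly R} :=
  \poly_(i < j.+1) (if poch (j.+1%:R + A + B + i.+1%:R + 1) (j - i) == 0
                     then 4%:R * (i.+2%:R * i.+1%:R * jacobi_coef A B j.+1 i.+2)
                     else 0).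

Lemma jacobi_coef_recurrence A h (i j : nat) : (i < j)%N ->
  4%:R * (jacobi_coef A (h - 1) j.+1 i.+2 * i.+2%:R * i.+1%:R
          + jacobi_coef A (h - 1) j.+1 i.+1 * i.+1%:R * i%:R)
  + 4%:R * h * (jacobi_coef A (h - 1) j.+1 i.+1 * i.+1%:R)
  = 4%:R * (h + j%:R) * jacobi_coef (A + 2%:R) (h - 1) j i
    + (jacobi_defect A (h - 1) j)`_i.
Proof.
move=> ij; rewrite coef_poly ltnW //.
have [r ->] : exists r, j = (i + r.+1)%N by exists (j - i.+1)%N; lia.
rewrite /jacobi_coef.
have -> : ((i + r.+1).+1 - i.+2 = r)%N by lia.
have -> : ((i + r.+1).+1 - i.+1 = r.+1)%N by lia.
have -> : ((i + r.+1) - i = r.+1)%N by lia.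
rewrite (pochSl _ r) (pochSl (_ + _ + _ + _ + 1) r) (pochS (_ + (A + 2%:R) + 1) r).
rewrite (pochSl (_ + (A + 2%:R) + _ + _ + 1) r).
have -> : i.+1%:R + A + 1 + 1 = i.+2%:R + A + 1.
  by rewrite -(addn1 i.+1) natrD; ring.
have -> : i%:R + (A + 2%:R) + 1 = i.+2%:R + A + 1.
  by rewrite -(addn1 i.+1) -(addn1 i) !natrD; ring.
have -> : (i + r.+1)%:R + (A + 2%:R) + (h - 1) + i%:R + 1 =
          (i + r.+1).+1%:R + A + (h - 1) + i.+1%:R + 1.
  by rewrite -(addn1 (i + r.+1)) -(addn1 i) !natrD; ring.
have -> : (i + r.+1).+1%:R + A + (h - 1) + i.+1%:R + 1 + 1 =
          (i + r.+1).+1%:R + A + (h - 1) + i.+2%:R + 1.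
  by rewrite -(addn1 i.+1) natrD; ring.
set D := poch (_ + A + (h - 1) + i.+2%:R + 1) r.
set b := (i + r.+1).+1%:R + A + (h - 1) + i.+1%:R + 1.
rewrite !factS.
have Fi := fact_neq0 R i; have Fr := fact_neq0 R r.
case: ifP => [/eqP bD0|/negbT].
  by rewrite bD0 !mulr0 !invr0 !mulr0 !mul0r !addr0; ring.
rewrite mulf_eq0 negb_or => /andP [b0 D0]; rewrite addr0 !natrM /b in b0 *.
have Ni : i.+1%:R != 0 :> R by rewrite pnatr_eq0.
have Ni2 : i.+2%:R != 0 :> R by rewrite pnatr_eq0.
have Nr : r.+1%:R != 0 :> R by rewrite pnatr_eq0.
rewrite -[(i + r.+1).+1]addn1 -[i.+2]addn1 -[i.+1]addn1 -[r.+1]addn1 !natrD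
  in b0 Ni Ni2 Nr *.
by field; rewrite D0 Fi Fr Nr Ni Ni2 b0.
Qed.

Lemma radial_op_jacobiU A h (j : nat) :
  radial_op (4%:R * h) (jacobiU A (h - 1) j.+1) =
  (4%:R * (h + j%:R)) *: jacobiU (A + 2%:R) (h - 1) j + jacobi_defect A (h - 1) j.
Proof.
apply/polyP => i; rewrite coef_radial_op coefD coefZ.
case: (ltngtP i j) => hij.
- rewrite !coef_jacobiU !ifT; try lia.
  exact: jacobi_coef_recurrence.
- rewrite !coef_jacobiU /jacobi_defect coef_poly !ifF; [ring| lia ..].
- subst i; rewrite !coef_jacobiU /jacobi_defect coef_poly !ltnn !ltnSn.
  rewrite subnn poch0 oner_eq0 addr0 /jacobi_coef !subnn !poch0 factS natrM fact0.
  have Fj := fact_neq0 R j.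
  have Nj : j.+1%:R != 0 :> R by rewrite pnatr_eq0.
  by rewrite -(addn1 j) natrD in Nj *; field; rewrite Fj Nj.
Qed.

End JacobiInU.

Section RadialProfile.
Variable R : realFieldType.
Implicit Types (h A : R) (j k : nat).

(* With h = n - 2 j + d / 2, the polynomial P^{mu,n}_{j,l} is
   Pprofile h mu j (|x|^2 - 1) Y^{n-2j}_l. *)
Definition Pprofile h A j : {poly R} := poch (h + j%:R) j *: jacobiU A (h - 1) j.

Lemma radial_op_PprofileS h A j :
  radial_op (4%:R * h) (Pprofile h A j.+1) =
  (4%:R * (h + 2%:R * j%:R) * (h + 2%:R * j%:R + 1)) *: Pprofile h (A + 2%:R) j
  + poch (h + j.+1%:R) j.+1 *: jacobi_defect A (h - 1) j.
Proof.
rewrite /Pprofile radial_opZ radial_op_jacobiU scalerDr !scalerA.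
congr (_ *: _ + _); rewrite mulrCA.
have -> : poch (h + j.+1%:R) j.+1 * (h + j%:R) = poch (h + j%:R) j.+2.
  rewrite (pochSl (h + j%:R)) mulrC -addn1 natrD addrA //.
by rewrite !pochS -addn1 natrD; ring.
Qed.

Lemma radial_op_Pprofile0 c h A : radial_op c (Pprofile h A 0) = 0.
Proof.
apply/eqP; rewrite -size_poly_leq0 (leq_trans (size_radial_op _ _)) //.
have : (size (Pprofile h A 0) <= 1)%N.
  exact: leq_trans (size_scale_leq _ _) (size_poly _ _).
by case: (size _).
Qed.

Lemma size_jacobi_defect A B j :
  (size (jacobi_defect A B j) <= (jzero (- j.+1%:R - A - B) j.+1).-1)%N.
Proof.
apply/leq_sizeP => i hi; rewrite /jacobi_defect coef_poly.
case: ifP => // ij; case: poch_eq0P => // - [t ht e].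
have ex : - j.+1%:R - A - B = (i.+2 + t)%:R.
  apply/eqP; rewrite -subr_eq0 -oppr_eq0 -e; apply/eqP.
  by rewrite -(addn1 i.+1) -(addn1 i) -(addn1 j) !natrD; ring.
by move: hi; rewrite (jzero_nat ex) //; lia.
Qed.

Definition radial_const h j k : R :=
  4%:R ^+ k * poch (h + 2%:R * j%:R - 2%:R * k%:R) (2 * k).

Lemma radial_constS h j k : (k < j)%N ->
  radial_const h j k *
    (4%:R * (h + 2%:R * (j - k.+1)%:R) * (h + 2%:R * (j - k.+1)%:R + 1)) =
  radial_const h j k.+1.
Proof.
move=> kj; rewrite /radial_const.
have -> : (2 * k.+1 = (2 * k).+2)%N by lia.
rewrite (pochSl _ (2 * k).+1) (pochSl _ (2 * k)) natrB //.
have -> : h + 2%:R * j%:R - 2%:R * k.+1%:R + 1 + 1 = h + 2%:R * j%:R - 2%:R * k%:R.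
  by rewrite -[k.+1]addn1 natrD; ring.
by rewrite exprS -[k.+1]addn1 natrD; ring.
Qed.

Lemma iter_radial_op_Pprofile h A j k : exists q : {poly R},
  (size q <= jzero (- j%:R - A - (h - 1)) j - k)%N /\
  iter k (radial_op (4%:R * h)) (Pprofile h A j) =
    (if (k <= j)%N then radial_const h j k *: Pprofile h (A + 2%:R * k%:R) (j - k)
     else 0) + q.
Proof.
elim: k => [|k [q [sq IH]]].
  exists 0; split; first by rewrite size_poly0.
  by rewrite /= /radial_const expr0 muln0 poch0 mulr1 scale1r mulr0 addr0 subn0 addr0.
rewrite iterS IH radial_opD.
set rq := radial_op _ q.
have size_rq : (size rq <= jzero (- j%:R - A - (h - 1)) j - k.+1)%N.
  by rewrite (leq_trans (size_radial_op _ _)) //; lia.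
case: (ltnP k j) => [kj|jk]; last first.
  exists rq; split => //.
  case: (leqP k j) => [kj|jk']; last by rewrite radial_op0 !add0r.
  have -> : (j - k = 0)%N by lia.
  by rewrite radial_opZ radial_op_Pprofile0 scaler0 !add0r.
rewrite (ltnW kj).
have ej : (j - k = (j - k.+1).+1)%N by lia.
exists (radial_const h j k *: (poch (h + (j - k.+1).+1%:R) (j - k.+1).+1 *:
          jacobi_defect (A + 2%:R * k%:R) (h - 1) (j - k.+1)) + rq); split.
  rewrite (leq_trans (size_polyD _ _)) // geq_max size_rq andbT.
  do 2 apply: (leq_trans (size_scale_leq _ _)).
  apply: (leq_trans (size_jacobi_defect _ _ _)).
  have -> : - (j - k.+1).+1%:R - (A + 2%:R * k%:R) - (h - 1) =
            (- j%:R - A - (h - 1)) - k%:R by rewrite -ej natrB 1?ltnW //; ring.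
  by rewrite -ej jzero_subn.
rewrite ej radial_opZ radial_op_PprofileS scalerDr scalerA [RHS]addrA radial_constS //.
by congr (_ *: Pprofile _ _ _ + _ + _); rewrite -[k.+1]addn1 natrD; ring.
Qed.

Lemma jacobiU_neg (B : R) s j : (s <= j)%N ->
  jacobiU (- s%:R) B j = ((j - s)`!%:R / j`!%:R) *: ('X^s * jacobiU s%:R B (j - s)).
Proof.
move=> sj; apply/polyP => k.
rewrite coefZ coefXnM !coef_jacobiU.
case: (ltnP k s) => ks.
  rewrite ifT ?mulr0; last by lia.
  have p0 : poch (k%:R + - s%:R + 1 : R) (j - k) == 0.
    by apply/poch_eq0P; exists (s - k.+1)%N; [lia | rewrite natrB // -addn1 natrD; ring].
  by rewrite /jacobi_coef (eqP p0) !mul0r.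
have [i ->] : exists i, k = (s + i)%N by exists (k - s)%N; lia.
rewrite addKn; case: (ltnP (s + i) j.+1) => hi; last by rewrite !ifF ?mulr0 //; lia.
rewrite !ifT; try lia.
have [r ->] : exists r, j = (s + i + r)%N by exists (j - (s + i))%N; lia.
rewrite /jacobi_coef.
have -> : (s + i + r - (s + i) = r)%N by lia.
have -> : (s + i + r - s - i = r)%N by lia.
have -> : (s + i + r - s = i + r)%N by lia.
have -> : (s + i)%:R + - s%:R + 1 = i%:R + 1 :> R by rewrite natrD; ring.
have -> : i%:R + s%:R + 1 = (s + i)%:R + 1 :> R by rewrite natrD; ring.
have -> : (i + r)%:R + s%:R + B + i%:R + 1 =
          (s + i + r)%:R + - s%:R + B + (s + i)%:R + 1 :> R by rewrite !natrD; ring.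
set D := poch (_ + _ + B + _ + 1) r.
have Fi := fact_neq0 R i; have Fr := fact_neq0 R r; have Fsi := fact_neq0 R (s + i).
have Fj := fact_neq0 R (s + i + r).
case: (eqVneq D 0) => [->|D0]; first by rewrite !mulr0 !invr0 !mulr0.
rewrite -[poch (i%:R + 1) r](mulfK Fi) -[poch ((s + i)%:R + 1) r](mulfK Fsi).
by rewrite !poch_fact; field; rewrite D0 Fi Fr Fsi Fj.
Qed.

Lemma Pprofile_neg h s j : 0 < h -> (s <= j)%N ->
  Pprofile h (- s%:R) j =
  (poch (1 - (h + 2%:R * j%:R)) j /
     (poch (- j%:R) s * poch (1 - (h + 2%:R * j%:R) + 2%:R * s%:R) (j - s)))
  *: ('X^s * Pprofile h s%:R (j - s)).
Proof.
move=> h0 sj.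
rewrite /Pprofile jacobiU_neg // -scalerAr !scalerA; congr (_ *: _).
rewrite (poch_reflect (1 - _)) (poch_reflect (- j%:R)) (poch_reflect (1 - _ + _)).
have -> : - (1 - (h + 2%:R * j%:R)) - j%:R + 1 = h + j%:R by ring.
have -> : - (- j%:R) - s%:R + 1 = (j - s)%:R + 1 :> R by rewrite natrB //; ring.
have -> : - (1 - (h + 2%:R * j%:R) + 2%:R * s%:R) - (j - s)%:R + 1 = h + (j - s)%:R.
  by rewrite natrB //; ring.
have fact_j := poch_fact R (j - s) s; rewrite subnK // in fact_j.
set P := poch (h + (j - s)%:R) (j - s).
have P0 : P != 0 by rewrite gt_eqF // poch_gt0 // ltr_wpDr.
have Fj := fact_neq0 R j; have Fjs := fact_neq0 R (j - s).
have -> : (-1) ^+ j = (-1) ^+ s * (-1) ^+ (j - s) :> R by rewrite -exprD subnKC.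
rewrite -[poch ((j - s)%:R + 1) s](mulfK Fjs) fact_j.
have S1 : (-1) ^+ s != 0 :> R by rewrite signr_eq0.
have S2 : (-1) ^+ (j - s) != 0 :> R by rewrite signr_eq0.
by field; rewrite P0 Fj Fjs S1 S2.
Qed.

End RadialProfile.

Section RadialLaplacian.
Variable R : realFieldType.
Variable d : nat.
Local Notation MP := {mpoly R[d]}.
Implicit Types (p q : {poly R}) (t g Y : MP).

Lemma pevalMPD p q t : pevalMP (p + q) t = pevalMP p t + pevalMP q t.
Proof. by rewrite /pevalMP rmorphD hornerD. Qed.

Lemma pevalMPB p q t : pevalMP (p - q) t = pevalMP p t - pevalMP q t.
Proof. by rewrite /pevalMP rmorphB hornerD hornerN. Qed.

Lemma pevalMPM p q t : pevalMP (p * q) t = pevalMP p t * pevalMP q t.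
Proof. by rewrite /pevalMP rmorphM hornerM. Qed.

Lemma pevalMPZ (a : R) p t : pevalMP (a *: p) t = a *: pevalMP p t.
Proof. by rewrite /pevalMP map_polyZ hornerZ mul_mpolyC. Qed.

Lemma pevalMPC (a : R) t : pevalMP a%:P t = a%:MP.
Proof. by rewrite /pevalMP map_polyC hornerC. Qed.

Lemma pevalMP0 t : pevalMP 0 t = 0.
Proof. by rewrite /pevalMP map_poly0 horner0. Qed.

Lemma pevalMP1 t : pevalMP 1 t = 1.
Proof. by rewrite /pevalMP rmorph1 hornerC. Qed.

Lemma pevalMPX t : pevalMP 'X t = t.
Proof. by rewrite /pevalMP map_polyX hornerX. Qed.

Lemma pevalMPXn n t : pevalMP 'X^n t = t ^+ n.
Proof. by rewrite /pevalMP map_polyXn hornerXn. Qed.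

Lemma pevalMP_comp p q t : pevalMP (p \Po q) t = pevalMP p (pevalMP q t).
Proof. by rewrite /pevalMP map_comp_poly horner_comp. Qed.

Lemma mderiv_pevalMP p g (i : 'I_d) : (pevalMP p g)^`M(i) = pevalMP p^`() g * g^`M(i).
Proof.
elim/poly_ind: p => [|p c IH]; first by rewrite deriv0 !pevalMP0 mderiv0 mul0r.
rewrite pevalMPD pevalMPM pevalMPX pevalMPC mderivD mderivC addr0 mderivM IH.
by rewrite derivMXaddC pevalMPD pevalMPM pevalMPX; ring.
Qed.

Lemma euler_mpolyX (m : 'X_{1..d}) :
  \sum_(i < d) 'X_i * ('X_[m] : MP)^`M(i) = 'X_[m] *+ mdeg m.
Proof.
rewrite mdegE -sumrMnr; apply: eq_bigr => i _; rewrite mderivX.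
have [->|nz] := eqVneq (m i) 0%N; first by rewrite scale0r mulr0 mulr0n.
by rewrite -scalerAr -mpolyXD addmC submK ?lep1mP // scaler_nat.
Qed.

Lemma euler_homog Y m : Y \is [in R[d], m.-homog] ->
  \sum_(i < d) 'X_i * Y^`M(i) = Y *+ m.
Proof.
move=> hY; rewrite [in RHS](mpolyE Y) [in LHS](mpolyE Y).
under eq_bigr => i _ do rewrite raddf_sum mulr_sumr.
rewrite exchange_big /= -sumrMnl !big_seq; apply: eq_bigr => mm hm.
under eq_bigr => i _ do rewrite linearZ /= -scalerAr.
by rewrite -scaler_sumr euler_mpolyX -scalerMnr (dhomog_mf hY hm).
Qed.

Lemma mderiv_mpolyX (k i : 'I_d) : ('X_k : MP)^`M(i) = (k == i)%:R.
Proof.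
rewrite mderivX mnm1E; case: eqP => [->|_]; last by rewrite scale0r.
have -> : (U_(i) - U_(i) = 0)%MM by apply/mnmP => l; rewrite mnmBE subnn mnm0E.
by rewrite mpolyX0 scale1r.
Qed.

Lemma mderiv_normsq (i : 'I_d) : (normsq R d)^`M(i) = 'X_i *+ 2.
Proof.
rewrite /normsq raddf_sum (bigD1 i) //= big1 ?addr0.
  by rewrite expr2 mderivM mderiv_mpolyX eqxx mulr1 mul1r.
by move=> k /negbTE ki; rewrite expr2 mderivM mderiv_mpolyX ki mulr0 mul0r addr0.
Qed.

Lemma lap_radial p Y m : Y \is [in R[d], m.-homog] -> lap Y = 0 ->
  lap (pevalMP p (normsq R d - 1) * Y) =
  pevalMP (radial_op (4%:R * (m%:R + d%:R / 2%:R)) p) (normsq R d - 1) * Y.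
Proof.
move=> hY lY; set g := normsq R d - 1.
have dg i : g^`M(i) = 'X_i *+ 2.
  by rewrite /g mderivB -mpolyC1 mderivC subr0 mderiv_normsq.
have lap_term i : ((pevalMP p g * Y)^`M(i))^`M(i) =
   pevalMP p^`()^`() g * ('X_i *+ 2) * ('X_i *+ 2) * Y
   + pevalMP p^`() g * 2%:R * Y
   + (pevalMP p^`() g * ('X_i *+ 2) * Y^`M(i)) *+ 2
   + pevalMP p g * Y^`M(i)^`M(i).
  by rewrite !(mderivM, mderivD, mderiv_pevalMP, dg, mderivMn) mderiv_mpolyX eqxx /=; ring.
rewrite /lap (eq_bigr _ (fun i _ => lap_term i)) !big_split /=.
have -> : \sum_(i < d) pevalMP p^`()^`() g * ('X_i *+ 2) * ('X_i *+ 2) * Y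
          = pevalMP p^`()^`() g * normsq R d * Y *+ 4.
  by rewrite /normsq mulr_sumr mulr_suml -sumrMnl; apply: eq_bigr => i _; ring.
have -> : \sum_(i < d) pevalMP p^`() g * 2%:R * Y = pevalMP p^`() g * 2%:R * Y *+ d.
  by rewrite sumr_const card_ord.
have -> : \sum_(i < d) (pevalMP p^`() g * ('X_i *+ 2) * Y^`M(i))
          = pevalMP p^`() g * (Y *+ m) *+ 2.
  rewrite -[in RHS](euler_homog hY) mulr_sumr -!sumrMnl.
  by apply: eq_bigr => i _; ring.
have -> : \sum_(i < d) pevalMP p g * Y^`M(i)^`M(i) = 0.
  by rewrite -mulr_sumr -/(lap Y) lY mulr0.
have -> : 4%:R * (m%:R + d%:R / 2%:R) = (4 * m + 2 * d)%N%:R :> R.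
  by rewrite natrD !natrM; field.
rewrite /radial_op pevalMPD !pevalMPZ pevalMPM pevalMPD pevalMPX pevalMP1 !scaler_nat /g.
ring.
Qed.

Lemma iter_lap_radial k p Y m : Y \is [in R[d], m.-homog] -> lap Y = 0 ->
  iter k (@lap R d) (pevalMP p (normsq R d - 1) * Y) =
  pevalMP (iter k (radial_op (4%:R * (m%:R + d%:R / 2%:R))) p) (normsq R d - 1) * Y.
Proof. by move=> hY lY; elim: k => [|k IH] //=; rewrite IH (lap_radial _ hY lY). Qed.

Lemma PfamE (mu : R) n j Y : (2 * j <= n)%N ->
  Pfam mu n j Y =
  pevalMP (Pprofile ((n - 2 * j)%N%:R + d%:R / 2%:R) mu j) (normsq R d - 1) * Y.
Proof.
move=> hj; rewrite /Pfam hj /Pprofile.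
set h := (n - 2 * j)%N%:R + d%:R / 2%:R.
have -> : n%:R - 2%:R * j%:R + d%:R / 2%:R - 1 = h - 1 by rewrite /h natrB // natrM.
have -> : n%:R - j%:R + d%:R / 2%:R = h + j%:R by rewrite /h natrB // natrM; ring.
rewrite gjacobiE pevalMP_comp pevalMPZ -scalerAl pevalMPZ pevalMPB pevalMPX pevalMP1.
congr (_ *: (pevalMP _ _ * _)).
have -> : 2%:R *: normsq R d - 1 - 1 = 2%:R *: (normsq R d - 1) :> MP.
  by rewrite scalerBr [2%:R *: 1]scaler_nat mulr2n opprD addrA.
by rewrite scalerA mulVf ?pnatr_eq0 // scale1r.
Qed.

End RadialLaplacian.

Section Lemma3p2.
Variables (R : realFieldType) (d : nat).
Hypothesis d_gt0 : (0 < d)%N.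

Let radial_index n j : R := (n - 2 * j)%N%:R + d%:R / 2%:R.

Let radial_index_gt0 n j : 0 < radial_index n j.
Proof. by rewrite ltr_wpDl ?ler0n // divr_gt0 ?ltr0n. Qed.

Lemma Pfam_neg s n j (Y : {mpoly R[d]}) : (s <= j)%N -> (2 * j <= n)%N ->
  Pfam (- s%:R) n j Y =
    (poch (1 - n%:R - d%:R / 2%:R) j /
       (poch (- j%:R) s * poch (1 - n%:R - d%:R / 2%:R + 2%:R * s%:R) (j - s)))
    *: ((normsq R d - 1) ^+ s * Pfam s%:R (n - 2 * s) (j - s)%N Y).
Proof.
move=> sj jn; rewrite PfamE // (@PfamE _ _ _ (n - 2 * s)); last by lia.
have -> : (n - 2 * s - 2 * (j - s) = n - 2 * j)%N by lia.
rewrite -/(radial_index n j) Pprofile_neg ?radial_index_gt0 //.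
have -> : 1 - (radial_index n j + 2%:R * j%:R) = 1 - n%:R - d%:R / 2%:R.
  by rewrite /radial_index natrB ?natrM //; ring.
by rewrite pevalMPZ pevalMPM pevalMPXn -scalerAl mulrA.
Qed.

Lemma iter_lap_Pfam_neg s k n j (Y : {mpoly R[d]}) :
  (2 * j <= n)%N -> Y \is [in R[d], (n - 2 * j).-homog] -> lap Y = 0 ->
  exists q : {poly R},
    (size q <= jzero (s%:R + j%:R - n%:R - d%:R / 2%:R + 1 : R) j - k)%N /\
    ((s <= j + k)%N -> q = 0) /\
    iter k (@lap R d) (Pfam (- s%:R) n j Y) =
      (4%:R ^+ k * poch (n%:R + d%:R / 2%:R - 2%:R * k%:R) (2 * k)) *:
         Pfam (2%:R * k%:R - s%:R) (n - 2 * k) (j%:Z - k%:Z) Y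
      + pevalMP q (normsq R d) * Y.
Proof.
move=> jn hY lY; rewrite PfamE // (iter_lap_radial _ _ hY lY) -/(radial_index n j).
have [q [size_q ->]] := iter_radial_op_Pprofile (radial_index n j) (- s%:R) j k.
have j0_arg : - j%:R - - s%:R - (radial_index n j - 1) =
              s%:R + j%:R - n%:R - d%:R / 2%:R + 1.
  by rewrite /radial_index natrB ?natrM //; ring.
rewrite j0_arg in size_q.
have size_qX : size (q \Po ('X - 1)) = size q.
  by rewrite size_comp_poly2 // -polyC1 size_XsubC.
exists (q \Po ('X - 1)); rewrite size_qX; split => //; split.
  move=> sjk; apply/eqP; rewrite -size_poly_leq0 size_qX.
  rewrite (leq_trans size_q) // leqn0 subn_eq0 jzero_lt //.
  have : (0 : R) < d%:R by rewrite ltr0n.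
  have : s%:R <= j%:R + k%:R :> R by rewrite -natrD ler_nat.
  have : (2 * j)%N%:R <= n%:R :> R by rewrite ler_nat.
  by rewrite natrM -(addn1 k) natrD; lra.
rewrite pevalMP_comp pevalMPB pevalMPX pevalMP1 pevalMPD mulrDl; congr (_ + _).
case: (leqP k j) => kj; last first.
  have -> : j%:Z - k%:Z = Negz (k - j).-1 by lia.
  by rewrite /= pevalMP0 mul0r scaler0.
have -> : j%:Z - k%:Z = (j - k)%N :> int by lia.
rewrite (@PfamE _ _ _ (n - 2 * k)); last by lia.
have -> : (n - 2 * k - 2 * (j - k) = n - 2 * j)%N by lia.
rewrite -/(radial_index n j) pevalMPZ -scalerAl; congr (_ *: (pevalMP (Pprofile _ _ _) _ * _)).
  by rewrite /radial_const /radial_index natrB ?natrM //; congr (_ * poch _ _); ring.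
ring.
Qed.

End Lemma3p2.

Unset Implicit Arguments.

Theorem lemma3p2 (R : realFieldType) (d s k n : nat) :
  (0 < d)%N -> (0 < s)%N ->
  (forall (j : nat) (Y : {mpoly R[d]}),
     (s <= j)%N -> (2 * j <= n)%N ->
     Y \is [in R[d], (n - 2 * j).-homog] -> lap Y = 0 ->
     Pfam (- s%:R) n j Y =
       (poch (1 - n%:R - d%:R / 2%:R) j /
          (poch (- j%:R) s * poch (1 - n%:R - d%:R / 2%:R + 2%:R * s%:R) (j - s)))
       *: ((normsq R d - 1) ^+ s * Pfam s%:R (n - 2 * s) (j - s)%N Y))
  /\
  (forall (j : nat) (Y : {mpoly R[d]}),
     (2 * j <= n)%N ->
     Y \is [in R[d], (n - 2 * j).-homog] -> lap Y = 0 ->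
     exists q : {poly R},
       (size q <= jzero (s%:R + j%:R - n%:R - d%:R / 2%:R + 1 : R) j - k)%N /\
       ((s <= j + k)%N -> q = 0) /\
       iter k (@lap R d) (Pfam (- s%:R) n j Y) =
         (4%:R ^+ k * poch (n%:R + d%:R / 2%:R - 2%:R * k%:R) (2 * k)) *:
            Pfam (2%:R * k%:R - s%:R) (n - 2 * k) (j%:Z - k%:Z) Y
         + pevalMP q (normsq R d) * Y).
Proof.
move=> d_gt0 _; split.
- by move=> j Y sj jn _ _; exact: Pfam_neg.
- by move=> j Y; exact: iter_lap_Pfam_neg.
Qed.
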